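(* Let $\mathfrak g$ be a real Lie algebra of dimension $4$ endowed with a generalized complex structure $(J,R,\sigma)$ of type $1$. Put $\mathfrak h=\operatorname{Im}R$ and $\mathfrak p=\ker\sigma$. Then $\mathfrak g=\mathfrak h\oplus\mathfrak p$. Moreover, for any basis $(e_1,e_2)$ of $\mathfrak h$ and any nonzero $e_3\in\mathfrak p$, setting $e_4=Je_3$, $(e_1,e_2,e_3,e_4)$ is a basis of $\mathfrak g$ and: 1. $J=\lambda(E_{11}+E_{22})+E_{34}-E_{43}$, $R=a\,e_{12}^{\#}$ and $\sigma=a^{-1}(1+\lambda^2)e^{12}_{\#}$ for some $\lambda\in\mathbb R$ and $a\neq0$. 2. There are real numbers $a_1,a_2,b_1,\dots,b_4,x_1,x_2,y_1,y_2,p_1,p_2,q_1,q_2,r_1,r_2$ such that the Lie brackets are $[e_1,e_2]=a_1e_1+a_2e_2$, $[e_3,e_4]=b_1e_1+b_2e_2+b_3e_3+b_4e_4$, $[e_1,e_3]=x_1e_3-y_1e_4-p_1e_1-r_1e_2$, $[e_1,e_4]=y_1e_3+x_1e_4-p_2e_1-r_2e_2$, $[e_2,e_3]=x_2e_3-y_2e_4-q_1e_1+p_1e_2$, $[e_2,e_4]=y_2e_3+x_2e_4-q_2e_1+p_2e_2$. 3. For brackets of the form in item 2, the Jacobi identity is equivalent to the system $a_1x_1+a_2x_2=0$, $a_1y_1+a_2y_2=0$, $a_1p_1+a_2q_1-p_1x_2+p_2y_2+q_1x_1-q_2y_1=0$, $a_1r_1-a_2p_1-p_1x_1+p_2y_1-r_1x_2+r_2y_2=0$,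 $a_1p_2+a_2q_2-p_1y_2-p_2x_2+q_1y_1+q_2x_1=0$, $a_1r_2-a_2p_2-p_1y_1-p_2x_1-r_1y_2-r_2x_2=0$, $a_1b_2-2b_1x_1-b_3p_1-b_4p_2+q_1r_2-q_2r_1=0$, $a_2b_2-2b_2x_1-b_3r_1-b_4r_2-2p_1r_2+2p_2r_1=0$, $-b_3x_1+b_4y_1+p_1y_1-p_2x_1+r_1y_2-r_2x_2=0$, $-b_3y_1-b_4x_1+p_1x_1+p_2y_1+r_1x_2+r_2y_2=0$, $-a_1b_1-2b_1x_2-b_3q_1-b_4q_2+2p_1q_2-2p_2q_1=0$, $-a_2b_1-2b_2x_2+b_3p_1+b_4p_2-q_1r_2+q_2r_1=0$, $-b_3x_2+b_4y_2-p_1y_2+p_2x_2+q_1y_1-q_2x_1=0$, $-b_3y_2-b_4x_2-p_1x_2-p_2y_2+q_1x_1+q_2y_1=0$.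
   Context: Let $\mathfrak g$ be a real finite-dimensional Lie algebra, $\Phi(\mathfrak g)=\mathfrak g\oplus\mathfrak g^*$ with the neutral pairing $\langle u+\alpha,v+\beta\rangle=\tfrac12(\alpha(v)+\beta(u))$ and the bracket $[u+\alpha,v+\beta]=[u,v]+\mathrm{ad}_u^t\beta-\mathrm{ad}_v^t\alpha$, where $(\mathrm{ad}_u^t\alpha)(v)=-\alpha([u,v])$. A generalized complex structure on $\mathfrak g$ is an endomorphism $K$ of $\Phi(\mathfrak g)$ with $K^2=-\mathrm{Id}$, $\langle Ka,b\rangle+\langle a,Kb\rangle=0$ for all $a,b$, and vanishing Nijenhuis torsion $N_K(a,b)=[Ka,Kb]-K[Ka,b]-K[a,Kb]+K^2[a,b]$. Writing $K=\begin{pmatrix}J&R\\ \sigma&-J^*\end{pmatrix}$ with $J\in\mathrm{End}(\mathfrak g)$ and skew-symmetric $R:\mathfrak g^*\to\mathfrak g$, $\sigma:\mathfrak g\to\mathfrak g^*$, the triple $(J,R,\sigma)$ is also called a generalized complex structure on $\mathfrak g$. Its type is $\tfrac12\dim(\operatorname{Im}R)^0$ (annihilator); for $\dim\mathfrak g=4$, type $0$ means $R$ invertible, type $1$ means $\operatorname{rank}R=2$, type $2$ means $R=0$. Notation: for a basis $(e_i)$ with dual basis $(e^i)$, $E_{ij}$ is the endomorphism sending $e_j$ to $e_i$ and vanishing on $e_k$, $k\ne j$; $e_{ij}=e_i\wedge e_j$, $e^{ij}=e^i\wedge e^j$; for $\pi\in\wedge^2\mathfrak g$, $\pi^\#:\mathfrak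 g^*\to\mathfrak g$ is defined by $\beta(\pi^\#(\alpha))=\pi(\alpha,\beta)$; for $\omega\in\wedge^2\mathfrak g^*$, $\omega_\#:\mathfrak g\to\mathfrak g^*$ is $u\mapsto i_u\omega$. Thus $e_{12}^\#=(e_1\wedge e_2)^\#$ and $e^{12}_\#=(e^1\wedge e^2)_\#$. *)

(* The 4-dimensional real Lie algebra g is modelled on
   row vectors 'rV[R]_4 (R : realType); g^* is also modelled on 'rV[R]_4 with
   the evaluation pairing [ev]. Linear maps act on the right of row vectors:
   J : g -> g is u |-> u *m J, R : g^* -> g is a |-> a *m Rm,
   sigma : g -> g^* is u |-> u *m S. *)
From HB Require Import structures.
From mathcomp Require Import all_boot all_order all_algebra.
From mathcomp Require Import reals.

Set Implicit Arguments.
Unset Strict Implicit.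
Unset Printing Implicit Defensive.

Import Order.TTheory GRing.Theory Num.Theory.
Local Open Scope ring_scope.

Section Defs.
Variable R : realType.

Notation vec := 'rV[R]_4.

Definition ev (a v : vec) : R := \sum_(i < 4) a 0 i * v 0 i.

Definition stdb (j : 'I_4) : vec := delta_mx 0 j.

Definition bilinear_br (br : vec -> vec -> vec) : Prop :=
  forall (c : R) (u v w : vec),
    br (c *: u + v) w = c *: br u w + br v w /\
    br w (c *: u + v) = c *: br w u + br w v.
Definition alternating_br (br : vec -> vec -> vec) : Prop :=
  forall u, br u u = 0.
Definition jacobi_br (br : vec -> vec -> vec) : Prop :=
  forall u v w, br u (br v w) + br v (br w u) + br w (br u v) = 0.
Definition lie_bracket (br : vec -> vec -> vec) : Prop :=
  [/\ bilinear_br br, alternating_br br & jacobi_br br].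

(* Phi(g) = g (+) g^*, elements are pairs (u, alpha) *)
Definition phi := (vec * vec)%type.
Definition padd (x y : phi) : phi := (x.1 + y.1, x.2 + y.2).
Definition popp (x : phi) : phi := (- x.1, - x.2).
Definition psub (x y : phi) : phi := padd x (popp y).
Definition pzero : phi := (0, 0).

Definition pairing (x y : phi) : R := 2^-1 * (ev x.2 y.1 + ev y.2 x.1).

(* ad_u^t a : the covector v |-> - a([u, v]) *)
Definition adt (br : vec -> vec -> vec) (u a : vec) : vec :=
  \row_j (- ev a (br u (stdb j))).

Definition dbracket (br : vec -> vec -> vec) (x y : phi) : phi :=
  (br x.1 y.1, adt br x.1 y.2 - adt br y.1 x.2).

(* K = ( J  R ; sigma  -J^* ), with (J^* a)(v) = a(J v), i.e. J^* a = a *m J^T *)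
Definition Kop (J Rm S : 'M[R]_4) (x : phi) : phi :=
  (x.1 *m J + x.2 *m Rm, x.1 *m S - x.2 *m J^T).

Definition nijenhuis (br : vec -> vec -> vec) (K : phi -> phi) (x y : phi) : phi :=
  padd (psub (psub (dbracket br (K x) (K y)) (K (dbracket br (K x) y)))
             (K (dbracket br x (K y))))
       (K (K (dbracket br x y))).

Definition gen_complex_op (br : vec -> vec -> vec) (K : phi -> phi) : Prop :=
  [/\ forall x, K (K x) = popp x,
      forall x y, pairing (K x) y + pairing x (K y) = 0
    & forall x y, nijenhuis br K x y = pzero].

Definition skew_dual (Rm : 'M[R]_4) : Prop :=
  forall a b : vec, ev b (a *m Rm) = - ev a (b *m Rm).
Definition skew_form (S : 'M[R]_4) : Prop :=
  forall u v : vec, ev (u *m S) v = - ev (v *m S) u.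

Definition gen_complex (br : vec -> vec -> vec) (J Rm S : 'M[R]_4) : Prop :=
  [/\ skew_dual Rm, skew_form S & gen_complex_op br (Kop J Rm S)].

(* type = 1/2 dim (Im R)^0 = (4 - dim Im R)/2 ; Im R is the row space of Rm *)
Definition gc_type (Rm : 'M[R]_4) : nat := (4 - \rank Rm)./2.

Definition in_imR (Rm : 'M[R]_4) (v : vec) : Prop := exists a : vec, v = a *m Rm.
Definition in_ker (S : 'M[R]_4) (u : vec) : Prop := u *m S = 0.

Definition basis_imR (Rm : 'M[R]_4) (e1 e2 : vec) : Prop :=
  [/\ in_imR Rm e1, in_imR Rm e2,
      (forall c1 c2 : R, c1 *: e1 + c2 *: e2 = 0 -> c1 = 0 /\ c2 = 0)
    & (forall v, in_imR Rm v -> exists c1 c2 : R, v = c1 *: e1 + c2 *: e2)].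

Definition basis4 (e1 e2 e3 e4 : vec) : Prop :=
  let s := [:: e1; e2; e3; e4] in
  (forall c : 'I_4 -> R, \sum_(i < 4) c i *: s`_i = 0 -> forall i, c i = 0) /\
  (forall v : vec, exists c : 'I_4 -> R, v = \sum_(i < 4) c i *: s`_i).

Definition mx4 (e1 e2 e3 e4 : vec) : 'M[R]_4 :=
  \matrix_(i < 4, j < 4) ([:: e1; e2; e3; e4]`_i) 0 j.

(* dual basis: e^i (as a covector), i.e. e^i(e_j) = delta_ij *)
Definition dualb (e1 e2 e3 e4 : vec) (i : 'I_4) : vec :=
  (col i (invmx (mx4 e1 e2 e3 e4)))^T.

(* (x /\ y)^# : a |-> a(x) y - a(y) x *)
Definition sharp2 (x y : vec) (a : vec) : vec := ev a x *: y - ev a y *: x.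
(* (al /\ be)_# : u |-> i_u (al /\ be) = al(u) be - be(u) al *)
Definition flat2 (al be : vec) (u : vec) : vec := ev al u *: be - ev be u *: al.

Definition bracket_form (br : vec -> vec -> vec) (e1 e2 e3 e4 : vec)
  (a1 a2 b1 b2 b3 b4 x1 x2 y1 y2 p1 p2 q1 q2 r1 r2 : R) : Prop :=
  [/\ br e1 e2 = a1 *: e1 + a2 *: e2,
      br e3 e4 = b1 *: e1 + b2 *: e2 + b3 *: e3 + b4 *: e4,
      br e1 e3 = x1 *: e3 - y1 *: e4 - p1 *: e1 - r1 *: e2
    & [/\ br e1 e4 = y1 *: e3 + x1 *: e4 - p2 *: e1 - r2 *: e2,
      br e2 e3 = x2 *: e3 - y2 *: e4 - q1 *: e1 + p1 *: e2
    & br e2 e4 = y2 *: e3 + x2 *: e4 - q2 *: e1 + p2 *: e2]].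

Definition jacobi_system
  (a1 a2 b1 b2 b3 b4 x1 x2 y1 y2 p1 p2 q1 q2 r1 r2 : R) : Prop :=
  (a1 * x1 + a2 * x2 = 0) /\
  (a1 * y1 + a2 * y2 = 0) /\
  (a1 * p1 + a2 * q1 - p1 * x2 + p2 * y2 + q1 * x1 - q2 * y1 = 0) /\
  (a1 * r1 - a2 * p1 - p1 * x1 + p2 * y1 - r1 * x2 + r2 * y2 = 0) /\
  (a1 * p2 + a2 * q2 - p1 * y2 - p2 * x2 + q1 * y1 + q2 * x1 = 0) /\
  (a1 * r2 - a2 * p2 - p1 * y1 - p2 * x1 - r1 * y2 - r2 * x2 = 0) /\
  (a1 * b2 - 2 * b1 * x1 - b3 * p1 - b4 * p2 + q1 * r2 - q2 * r1 = 0) /\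
  (a2 * b2 - 2 * b2 * x1 - b3 * r1 - b4 * r2 - 2 * p1 * r2 + 2 * p2 * r1 = 0) /\
  (- b3 * x1 + b4 * y1 + p1 * y1 - p2 * x1 + r1 * y2 - r2 * x2 = 0) /\
  (- b3 * y1 - b4 * x1 + p1 * x1 + p2 * y1 + r1 * x2 + r2 * y2 = 0) /\
  (- a1 * b1 - 2 * b1 * x2 - b3 * q1 - b4 * q2 + 2 * p1 * q2 - 2 * p2 * q1 = 0) /\
  (- a2 * b1 - 2 * b2 * x2 + b3 * p1 + b4 * p2 - q1 * r2 + q2 * r1 = 0) /\
  (- b3 * x2 + b4 * y2 - p1 * y2 + p2 * x2 + q1 * y1 - q2 * x1 = 0) /\
  (- b3 * y2 - b4 * x2 - p1 * x2 - p2 * y2 + q1 * x1 + q2 * y1 = 0).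

End Defs.

(* On a bracket of the form of
     item 2, the sixteen coordinates of these four Jacobiators are, up to
     sign, exactly the fourteen polynomials of the system.
   - h = Im R is 2-dimensional: a skew-symmetric matrix never has rank 1.
   - Items 1 and 2.  K^2 = -1 gives J^2 + R sigma = -1, sigma J = J^* sigma
     and J R = R J^*.  Skew-symmetry of R then forces R = a e12^# on a basis
     (e1, e2) of h and J = lam on h; hence sigma = a^-1 (1 + lam^2) e^12_#,
     J^2 = -1 on p = ker sigma, g = h (+) p and (e1, e2, e3, J e3) is a basis.
     Finally, five components of the vanishing Nijenhuis torsion are exactly
     the relations between the structure constants stated in item 2. *)
From HB Require Import structures.
From mathcomp Require Import all_boot all_order all_algebra.
From mathcomp Require Import reals.
From mathcomp Require Import ring lra.
Import GRing.Theory Num.Theory.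
Local Open Scope ring_scope.
Set Implicit Arguments.
Unset Strict Implicit.
Unset Printing Implicit Defensive.

Definition o0 : 'I_4 := @Ordinal 4 0 isT.
Definition o1 : 'I_4 := @Ordinal 4 1 isT.
Definition o2 : 'I_4 := @Ordinal 4 2 isT.
Definition o3 : 'I_4 := @Ordinal 4 3 isT.

Lemma sum4 (V : zmodType) (F : 'I_4 -> V) :
  \sum_(i < 4) F i = F o0 + F o1 + F o2 + F o3.
Proof.
rewrite !big_ord_recl big_ord0 addr0 !addrA.
by congr (_ + _ + _ + _); congr F; apply: val_inj.
Qed.

Lemma ord4P (P : 'I_4 -> Prop) : P o0 -> P o1 -> P o2 -> P o3 -> forall i, P i.
Proof.
move=> P0 P1 P2 P3 [[|[|[|[|i]]]] lti] //.
- by have -> : Ordinal lti = o0 by apply: val_inj.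
- by have -> : Ordinal lti = o1 by apply: val_inj.
- by have -> : Ordinal lti = o2 by apply: val_inj.
- by have -> : Ordinal lti = o3 by apply: val_inj.
Qed.

Section Bracket.
Variable R : realType.
Notation vec := 'rV[R]_4.
Variable br : vec -> vec -> vec.
Hypothesis bil : bilinear_br br.

Lemma br0l w : br 0 w = 0.
Proof.
have := (bil 1 0 0 w).1; rewrite !scale1r addr0.
by move/(congr1 (fun x => x - br 0 w)); rewrite addrK subrr => <-.
Qed.
Lemma br0r w : br w 0 = 0.
Proof.
have := (bil 1 0 0 w).2; rewrite !scale1r addr0.
by move/(congr1 (fun x => x - br w 0)); rewrite addrK subrr => <-.
Qed.
Lemma brDl u v w : br (u + v) w = br u w + br v w.
Proof. by have := (bil 1 u v w).1; rewrite !scale1r. Qed.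
Lemma brDr u v w : br w (u + v) = br w u + br w v.
Proof. by have := (bil 1 u v w).2; rewrite !scale1r. Qed.
Lemma brZl c u w : br (c *: u) w = c *: br u w.
Proof. by have := (bil c u 0 w).1; rewrite !addr0 br0l addr0. Qed.
Lemma brZr c u w : br w (c *: u) = c *: br w u.
Proof. by have := (bil c u 0 w).2; rewrite !addr0 br0r addr0. Qed.
Lemma brNl u w : br (- u) w = - br u w.
Proof. by rewrite -scaleN1r brZl scaleN1r. Qed.
Lemma brNr u w : br w (- u) = - br w u.
Proof. by rewrite -scaleN1r brZr scaleN1r. Qed.
Lemma brBl u v w : br (u - v) w = br u w - br v w.
Proof. by rewrite brDl brNl. Qed.
Lemma brBr u v w : br w (u - v) = br w u - br w v.
Proof. by rewrite brDr brNr. Qed.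
Lemma br_suml n (F : 'I_n -> vec) w :
  br (\sum_(i < n) F i) w = \sum_(i < n) br (F i) w.
Proof.
elim: n F => [|n IH] F; first by rewrite !big_ord0 br0l.
by rewrite !big_ord_recr /= brDl IH.
Qed.
Lemma br_sumr n (F : 'I_n -> vec) w :
  br w (\sum_(i < n) F i) = \sum_(i < n) br w (F i).
Proof.
elim: n F => [|n IH] F; first by rewrite !big_ord0 br0r.
by rewrite !big_ord_recr /= brDr IH.
Qed.

Hypothesis alt : alternating_br br.

Lemma br_anti u v : br v u = - br u v.
Proof.
have := alt (u + v); rewrite brDl !brDr !alt add0r addr0 => /eqP.
by rewrite addr_eq0 => /eqP ->; rewrite opprK.
Qed.
End Bracket.

Section Pairing.
Variable R : realType.
Notation vec := 'rV[R]_4.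

Lemma ev_sym (a v : vec) : ev a v = ev v a.
Proof. by apply: eq_bigr => i _; rewrite mulrC. Qed.
Lemma evDr (a u v : vec) : ev a (u + v) = ev a u + ev a v.
Proof. by rewrite /ev -big_split; apply: eq_bigr => i _; rewrite mxE mulrDr. Qed.
Lemma evZr (a : vec) (c : R) (v : vec) : ev a (c *: v) = c * ev a v.
Proof. by rewrite /ev mulr_sumr; apply: eq_bigr => i _; rewrite mxE mulrCA. Qed.
Lemma ev0r (a : vec) : ev a 0 = 0.
Proof. by rewrite /ev big1 // => i _; rewrite mxE mulr0. Qed.
Lemma evNr (a v : vec) : ev a (- v) = - ev a v.
Proof. by rewrite -scaleN1r evZr mulN1r. Qed.
Lemma evBr (a u v : vec) : ev a (u - v) = ev a u - ev a v.
Proof. by rewrite evDr evNr. Qed.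
Lemma evDl (a b v : vec) : ev (a + b) v = ev a v + ev b v.
Proof. by rewrite ev_sym evDr !(ev_sym v). Qed.
Lemma evZl (a : vec) (c : R) (v : vec) : ev (c *: a) v = c * ev a v.
Proof. by rewrite ev_sym evZr ev_sym. Qed.
Lemma ev0l (v : vec) : ev 0 v = 0.
Proof. by rewrite ev_sym ev0r. Qed.
Lemma evNl (a v : vec) : ev (- a) v = - ev a v.
Proof. by rewrite ev_sym evNr ev_sym. Qed.
Lemma evBl (a b v : vec) : ev (a - b) v = ev a v - ev b v.
Proof. by rewrite evDl evNl. Qed.
Lemma ev_sumr n (F : 'I_n -> vec) (a : vec) :
  ev a (\sum_(i < n) F i) = \sum_(i < n) ev a (F i).
Proof.
elim: n F => [|n IH] F; first by rewrite !big_ord0 ev0r.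
by rewrite !big_ord_recr /= evDr IH.
Qed.

Lemma ev_mulmx (a v : vec) (M : 'M[R]_4) : ev a (v *m M) = ev (a *m M^T) v.
Proof.
have evE (b w : vec) : ev b w = (b *m w^T) 0 0.
  by rewrite mxE; apply: eq_bigr => i _; rewrite mxE.
by rewrite !evE trmx_mul mulmxA.
Qed.

Lemma ev_stdb (j : 'I_4) (v : vec) : ev (stdb R j) v = v 0 j.
Proof.
rewrite /ev (bigD1 j) //= big1 => [|i /negbTE ij].
  by rewrite mxE !eqxx mul1r addr0.
by rewrite mxE ij andbF mul0r.
Qed.
Lemma stdb_mul (i : 'I_4) (M : 'M[R]_4) (j : 'I_4) : (stdb R i *m M) 0 j = M i j.
Proof. by rewrite /stdb -rowE mxE. Qed.

Lemma ev_eq0 (a : vec) : (forall v, ev a v = 0) -> a = 0.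
Proof. by move=> H; apply/rowP => j; rewrite mxE -(H (stdb R j)) ev_sym ev_stdb. Qed.

Lemma ev_adt (br : vec -> vec -> vec) : bilinear_br br ->
  forall u a v : vec, ev (adt br u a) v = - ev a (br u v).
Proof.
move=> bil u a v.
rewrite {2}(row_sum_delta v) (br_sumr bil) ev_sumr /ev -sumrN.
apply: eq_bigr => j _; rewrite !mxE (brZr bil) /= -/(ev _ _) evZr /stdb.
by rewrite mulNr mulrC.
Qed.
End Pairing.

Section Basis.
Variable R : realType.
Notation vec := 'rV[R]_4.
Variables f1 f2 f3 f4 : vec.
Let fs := [:: f1; f2; f3; f4].
Let M := mx4 f1 f2 f3 f4.

Lemma mul_mx4 (w : vec) : w *m M = \sum_(i < 4) w 0 i *: fs`_i.
Proof.
rewrite mulmx_sum_row; apply: eq_bigr => i _.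
by congr (_ *: _); apply/rowP => k; rewrite !mxE.
Qed.

Hypothesis free :
  forall c : 'I_4 -> R, \sum_(i < 4) c i *: fs`_i = 0 -> forall i, c i = 0.

Lemma mx4_unit : M \in unitmx.
Proof.
rewrite -row_free_unit; apply: inj_row_free => w.
by rewrite mul_mx4 => /free w0; apply/rowP => i; rewrite w0 mxE.
Qed.
Lemma basis4_of_free : basis4 f1 f2 f3 f4.
Proof.
split; first exact: free.
move=> v; exists (fun i => (v *m invmx M) 0 i).
by rewrite -mul_mx4 mulmxKV // mx4_unit.
Qed.

Lemma dualbE (i j : 'I_4) : ev (dualb f1 f2 f3 f4 i) fs`_j = (i == j)%:R.
Proof.
have := mulmxV mx4_unit; move/matrixP/(_ j i); rewrite !mxE eq_sym => <-.
by apply: eq_bigr => k _; rewrite !mxE mulrC.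
Qed.
End Basis.

Lemma basis_ev0 (R : realType) (f1 f2 f3 f4 a : 'rV[R]_4) : basis4 f1 f2 f3 f4 ->
  (forall i : 'I_4, ev a [:: f1; f2; f3; f4]`_i = 0) -> a = 0.
Proof.
move=> [_ span] a0; apply: ev_eq0 => v; have [c ->] := span v.
by rewrite ev_sumr big1 // => i _; rewrite evZr a0 mulr0.
Qed.

Section Jacobiator.
Variable R : realType.
Notation vec := 'rV[R]_4.
Variable br : vec -> vec -> vec.
Hypotheses (bil : bilinear_br br) (alt : alternating_br br).

Definition jacobiator (u v w : vec) : vec :=
  br u (br v w) + br v (br w u) + br w (br u v).

Lemma jacobiator_cyc u v w : jacobiator u v w = jacobiator v w u.
Proof. by rewrite /jacobiator [RHS]addrC addrA. Qed.

Lemma jacobiator_swap u v w : jacobiator v u w = - jacobiator u v w.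
Proof.
rewrite /jacobiator (br_anti bil alt w u) (br_anti bil alt v w).
rewrite (br_anti bil alt u v) !(brNr bil) !opprD.
by congr (_ + _); rewrite addrC.
Qed.

Lemma jacobiator_rep u w : jacobiator u u w = 0.
Proof.
by rewrite /jacobiator alt (br0r bil) (br_anti bil alt u w) (brNr bil) addr0 subrr.
Qed.

Lemma jacobiator_suml (F : 'I_4 -> vec) (c : 'I_4 -> R) v w :
  jacobiator (\sum_(i < 4) c i *: F i) v w = \sum_(i < 4) c i *: jacobiator (F i) v w.
Proof.
rewrite /jacobiator !(br_suml bil) !(br_sumr bil) -!big_split.
by apply: eq_bigr => i _ /=; rewrite !(brZl bil) !(brZr bil) ?(brZl bil) !scalerDr.
Qed.

Variables f1 f2 f3 f4 : vec.
Let fs := [:: f1; f2; f3; f4].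
Hypothesis basis : basis4 f1 f2 f3 f4.

Lemma jacobi_of_basis :
  (forall i j k : 'I_4, jacobiator fs`_i fs`_j fs`_k = 0) -> jacobi_br br.
Proof.
have [_ span] := basis.
have lin1 w v c : (forall i : 'I_4, jacobiator fs`_i v w = 0) ->
    jacobiator (\sum_(i < 4) c i *: fs`_i) v w = 0.
  by move=> h; rewrite jacobiator_suml big1 // => i _; rewrite h scaler0.
move=> h3 u v w; have [a ->] := span u; apply: (lin1) => i.
have [b ->] := span v; rewrite jacobiator_cyc; apply: (lin1) => j.
have [c ->] := span w; rewrite jacobiator_cyc; apply: (lin1) => k.
by rewrite jacobiator_cyc h3.
Qed.

Lemma basis_jacobi_of_increasing :
  jacobiator f1 f2 f3 = 0 -> jacobiator f1 f2 f4 = 0 ->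
  jacobiator f1 f3 f4 = 0 -> jacobiator f2 f3 f4 = 0 ->
  forall i j k : 'I_4, jacobiator fs`_i fs`_j fs`_k = 0.
Proof.
move=> h123 h124 h134 h234.
apply: ord4P; apply: ord4P; apply: ord4P => /=;
  first [ by rewrite jacobiator_rep
        | by rewrite jacobiator_cyc jacobiator_rep
        | by rewrite -jacobiator_cyc jacobiator_rep
        | by []
        | by rewrite jacobiator_cyc
        | by rewrite -jacobiator_cyc
        | by rewrite jacobiator_swap ?(h123, h124, h134, h234) oppr0
        | by rewrite jacobiator_cyc jacobiator_swap ?(h123, h124, h134, h234) oppr0
        | by rewrite -jacobiator_cyc jacobiator_swap ?(h123, h124, h134, h234) oppr0 ].
Qed.
End Jacobiator.

Section StructureConstants.
Variable R : realType.
Variables (a1 a2 b1 b2 b3 b4 x1 x2 y1 y2 p1 p2 q1 q2 r1 r2 : R).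

(* Structure constants of a bracket of the form of item 2: the entry (i, j)
   lists the coordinates of [e_i, e_j] in the basis (e_1, ..., e_4). *)
Definition struct_table : seq (seq (seq R)) :=
 [:: [:: [::0;0;0;0]; [::a1;a2;0;0]; [::-p1;-r1;x1;-y1]; [::-p2;-r2;y1;x1]];
     [:: [::-a1;-a2;0;0]; [::0;0;0;0]; [::-q1;p1;x2;-y2]; [::-q2;p2;y2;x2]];
     [:: [::p1;r1;-x1;y1]; [::q1;-p1;-x2;y2]; [::0;0;0;0]; [::b1;b2;b3;b4]];
     [:: [::p2;r2;-y1;-x1]; [::q2;-p2;-y2;-x2]; [::-b1;-b2;-b3;-b4]; [::0;0;0;0]]].
Definition sconst (i j k : 'I_4) : R :=
  nth 0 (nth [::] (nth [::] struct_table i) j) k.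

(* The l-th coordinate of the Jacobiator of (e_i, e_j, e_k). *)
Definition jacobiator_coord (i j k l : 'I_4) : R :=
  \sum_(m < 4) (sconst j k m * sconst i m l + sconst k i m * sconst j m l
                + sconst i j m * sconst k m l).

(* The system of item 3 says exactly that the Jacobiators of the four
   increasing basis triples vanish: each of their sixteen coordinates is, up
   to sign, one of the fourteen equations. *)
Lemma jacobi_system_iff_coords :
  jacobi_system a1 a2 b1 b2 b3 b4 x1 x2 y1 y2 p1 p2 q1 q2 r1 r2 <->
  forall l, [/\ jacobiator_coord o0 o1 o2 l = 0, jacobiator_coord o0 o1 o3 l = 0,
                jacobiator_coord o0 o2 o3 l = 0 & jacobiator_coord o1 o2 o3 l = 0].
Proof.
rewrite /jacobiator_coord; split.
  move=> [E0 [E1 [E2 [E3 [E4 [E5 [E6 [E7 [E8 [E9 [E10 [E11 [E12 E13]]]]]]]]]]]]].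
  by apply: ord4P; rewrite !sum4 /sconst /=; split; lra.
move=> coords; move: (coords o0) (coords o1) (coords o2) (coords o3).
rewrite !sum4 /sconst /= => -[? ? ? ?] [? ? ? ?] [? ? ? ?] [? ? ? ?].
by do 13 (split; first lra); lra.
Qed.
End StructureConstants.

Section JacobiSystem.
Variable R : realType.
Notation vec := 'rV[R]_4.
Variables (a1 a2 b1 b2 b3 b4 x1 x2 y1 y2 p1 p2 q1 q2 r1 r2 : R).
Variables (br : vec -> vec -> vec) (f1 f2 f3 f4 : vec).
Hypotheses (bil : bilinear_br br) (alt : alternating_br br).
Hypothesis basis : basis4 f1 f2 f3 f4.
Hypothesis form :
  bracket_form br f1 f2 f3 f4 a1 a2 b1 b2 b3 b4 x1 x2 y1 y2 p1 p2 q1 q2 r1 r2.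

Let fs := [:: f1; f2; f3; f4].
Local Notation sc := (sconst a1 a2 b1 b2 b3 b4 x1 x2 y1 y2 p1 p2 q1 q2 r1 r2).

Definition lincomb (c : 'I_4 -> R) : vec := \sum_(i < 4) c i *: fs`_i.

Lemma lincomb_eq0 c : lincomb c = 0 -> forall l, c l = 0.
Proof. by have [free _] := basis; apply: free. Qed.

Lemma br_basis (i j : 'I_4) : br fs`_i fs`_j = lincomb (sc i j).
Proof.
have [h12 h34 h13 [h14 h23 h24]] := form; have anti := br_anti bil alt.
move: i j; apply: ord4P; apply: ord4P; rewrite /lincomb sum4 /sconst /=;
  rewrite ?alt ?(anti f1 f2) ?(anti f1 f3) ?(anti f1 f4) ?(anti f2 f3)
    ?(anti f2 f4) ?(anti f3 f4) ?h12 ?h34 ?h13 ?h14 ?h23 ?h24;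
  by apply/rowP => k; rewrite !mxE; ring.
Qed.

Lemma br_basis_lincomb (i : 'I_4) c :
  br fs`_i (lincomb c) = lincomb (fun l => \sum_(m < 4) c m * sc i m l).
Proof.
rewrite {1}/lincomb (br_sumr bil).
under eq_bigr => m _ do rewrite (brZr bil) br_basis /lincomb scaler_sumr.
under eq_bigr => m _ do under eq_bigr => l _ do rewrite scalerA.
by rewrite exchange_big; apply: eq_bigr => l _; rewrite scaler_suml.
Qed.

Lemma jacobiator_basis (i j k : 'I_4) :
  jacobiator br fs`_i fs`_j fs`_k =
  lincomb (jacobiator_coord a1 a2 b1 b2 b3 b4 x1 x2 y1 y2 p1 p2 q1 q2 r1 r2 i j k).
Proof.
rewrite /jacobiator !br_basis !br_basis_lincomb /lincomb -!big_split.
by apply: eq_bigr => l _; rewrite /jacobiator_coord !big_split /= !scalerDl.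
Qed.

Theorem jacobi_iff_system :
  jacobi_br br <-> jacobi_system a1 a2 b1 b2 b3 b4 x1 x2 y1 y2 p1 p2 q1 q2 r1 r2.
Proof.
rewrite jacobi_system_iff_coords; split.
  move=> jac l; have coord0 i j k :
      jacobiator_coord a1 a2 b1 b2 b3 b4 x1 x2 y1 y2 p1 p2 q1 q2 r1 r2 i j k l = 0.
    by apply: lincomb_eq0; rewrite -jacobiator_basis; apply: jac.
  by split; apply: coord0.
move=> coords; apply: (jacobi_of_basis bil basis).
have vanish i j k : (forall l,
    jacobiator_coord a1 a2 b1 b2 b3 b4 x1 x2 y1 y2 p1 p2 q1 q2 r1 r2 i j k l = 0) ->
    jacobiator br fs`_i fs`_j fs`_k = 0.
  by move=> c0; rewrite jacobiator_basis /lincomb big1 // => l _; rewrite c0 scale0r.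
apply: (basis_jacobi_of_increasing bil alt).
- by apply: (vanish o0 o1 o2) => l; case: (coords l).
- by apply: (vanish o0 o1 o3) => l; case: (coords l).
- by apply: (vanish o0 o2 o3) => l; case: (coords l).
- by apply: (vanish o1 o2 o3) => l; case: (coords l).
Qed.
End JacobiSystem.

(* A skew-symmetric matrix never has rank 1: writing it as a column times a
   row, M i j = d_i b_j, the diagonal gives d_i b_i = 0, whence
   (M i j)^2 = - M i j M j i = - (d_i b_i) (d_j b_j) = 0. *)
Lemma skew_rank_neq1 (R : numFieldType) n (M : 'M[R]_n) :
  (forall i j, M j i = - M i j) -> \rank M != 1%N.
Proof.
move=> skew; apply/eqP => rk1.
have [d [b Mdb]] : exists (d : 'M[R]_(n, 1)) (b : 'M[R]_(1, n)), M = d *m b.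
  have := eq_row_base M; move: (row_base M); rewrite rk1 => B eqB.
  have /submxP[D ->] : (M <= B)%MS by rewrite eqB.
  by exists D, B.
have Mij i j : M i j = d i 0 * b 0 j by rewrite Mdb mxE big_ord1.
have diag i : d i 0 * b 0 i = 0.
  by rewrite -Mij; have /eqP := skew i i; rewrite -addr_eq0 -mulr2n mulrn_eq0 => /eqP.
suff M0 : M = 0 by move: rk1; rewrite M0 mxrank0.
apply/matrixP => i j; rewrite mxE.
have sq : M i j * M i j = - ((d i 0 * b 0 i) * (d j 0 * b 0 j)).
  by rewrite {2}(skew j i) !Mij; ring.
by move: sq; rewrite !diag mul0r oppr0 => /eqP; rewrite mulf_eq0 orbb => /eqP.
Qed.

Section ImageOfR.
Variable R : realType.
Notation vec := 'rV[R]_4.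
Variable Rm : 'M[R]_4.

Lemma in_imR_submx (v : vec) : in_imR Rm v <-> (v <= Rm)%MS.
Proof. by split; [case=> a ->; apply: submxMl | case/submxP => a ->; exists a]. Qed.

Lemma type1_rank : gc_type Rm = 1%N -> \rank Rm = 1%N \/ \rank Rm = 2%N.
Proof.
rewrite /gc_type; move: (rank_leq_row Rm).
by case: (\rank Rm) => [|[|[|[|[|n]]]]] //= _ _; [left | right].
Qed.

Lemma rank2_basis : \rank Rm = 2%N -> exists e1 e2, basis_imR Rm e1 e2.
Proof.
move=> rk2; have := eq_row_base Rm; have := row_base_free Rm.
move: (row_base Rm); rewrite rk2 => B freeB eqB.
have inB (v : vec) : in_imR Rm v <-> (v <= B)%MS by rewrite in_imR_submx eqB.
exists (row ord0 B), (row (lift ord0 ord0) B).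
split; try by apply/inB; apply: row_sub.
  move=> c1 c2 c0; pose w : 'rV[R]_2 := \row_j [:: c1; c2]`_j.
  have : w *m B = 0 *m B.
    by rewrite mul0mx mulmx_sum_row big_ord_recl big_ord1 /= -c0 !mxE /=.
  move/(row_free_inj freeB)/rowP => w0.
  by move: (w0 ord0) (w0 (lift ord0 ord0)); rewrite !mxE /= => -> ->.
move=> v /inB /submxP [D ->]; exists (D 0 ord0), (D 0 (lift ord0 ord0)).
by rewrite mulmx_sum_row big_ord_recl big_ord1.
Qed.

Hypothesis skewR : skew_dual Rm.

Lemma basis_imR_exists : gc_type Rm = 1%N -> exists e1 e2, basis_imR Rm e1 e2.
Proof.
move=> /type1_rank [rk1|]; last exact: rank2_basis.
have skew i j : Rm j i = - Rm i j.
  by have := skewR (stdb R j) (stdb R i); rewrite !ev_stdb !stdb_mul.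
by move: (skew_rank_neq1 skew); rewrite rk1.
Qed.
End ImageOfR.

Section GeneralizedComplex.
Variable R : realType.
Notation vec := 'rV[R]_4.
Variables (br : vec -> vec -> vec) (J Rm S : 'M[R]_4).
Hypotheses (bil : bilinear_br br) (alt : alternating_br br).
Hypotheses (skewR : skew_dual Rm) (skewS : skew_form S).
Hypothesis K2 : forall x, Kop J Rm S (Kop J Rm S x) = popp x.
Hypothesis torsion0 : forall x y, nijenhuis br (Kop J Rm S) x y = pzero R.

(* K^2 = -1 read on g: J^2 + R sigma = -1 and sigma J = J^* sigma ... *)
Lemma JJ_add_SR (u : vec) : u *m J *m J + u *m S *m Rm = - u.
Proof.
have [+ _] := K2 (u, 0); rewrite /Kop /popp /=.
by rewrite !mul0mx addr0 subr0.
Qed.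
Lemma JS_eq_SJt (u : vec) : u *m J *m S = u *m S *m J^T.
Proof.
have [_ +] := K2 (u, 0); rewrite /Kop /popp /=.
by rewrite !mul0mx addr0 subr0 oppr0 => /eqP; rewrite subr_eq0 => /eqP.
Qed.
(* ... and read on g^*: J R = R J^*. *)
Lemma RJ_eq_JtR (a : vec) : a *m Rm *m J = a *m J^T *m Rm.
Proof.
have [+ _] := K2 (0, a); rewrite /Kop /popp /=.
by rewrite !mul0mx add0r sub0r oppr0 mulNmx => /eqP; rewrite addr_eq0 opprK => /eqP.
Qed.

Lemma ev_S_diag (u : vec) : ev (u *m S) u = 0.
Proof. by have /eqP := skewS u u; rewrite -addr_eq0 -mulr2n mulrn_eq0 => /eqP. Qed.
Lemma ev_R_diag (a : vec) : ev a (a *m Rm) = 0.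
Proof. by have /eqP := skewR a a; rewrite -addr_eq0 -mulr2n mulrn_eq0 => /eqP. Qed.

Lemma imR_J (v : vec) : in_imR Rm v -> in_imR Rm (v *m J).
Proof. by case=> a ->; exists (a *m J^T); rewrite RJ_eq_JtR. Qed.

Section BasisOfH.
Variables e1 e2 : vec.
Hypothesis hbasis : basis_imR Rm e1 e2.
Variables a1 a2 : vec.
Hypotheses (e1_def : e1 = a1 *m Rm) (e2_def : e2 = a2 *m Rm).

Lemma hfree c1 c2 : c1 *: e1 + c2 *: e2 = 0 -> c1 = 0 /\ c2 = 0.
Proof. by case: hbasis => _ _ free _; apply: free. Qed.
Lemma hspan v : in_imR Rm v -> exists c1 c2, v = c1 *: e1 + c2 *: e2.
Proof. by case: hbasis => _ _ _ span; apply: span. Qed.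
Lemma e1_neq0 : e1 != 0.
Proof.
apply/eqP => e10; have [] := @hfree 1 0; last by move/eqP; rewrite oner_eq0.
by rewrite e10 scaler0 scale0r addr0.
Qed.

(* R restricted to the span of a1, a2 is the 2x2 skew matrix with
   off-diagonal entry m. *)
Let m := ev a2 e1.
Lemma ev_a1e1 : ev a1 e1 = 0. Proof. by rewrite e1_def ev_R_diag. Qed.
Lemma ev_a2e2 : ev a2 e2 = 0. Proof. by rewrite e2_def ev_R_diag. Qed.
Lemma ev_a1e2 : ev a1 e2 = - m. Proof. by rewrite /m e1_def e2_def skewR. Qed.

Lemma R_coords b : exists c1 c2, [/\ b *m Rm = c1 *: e1 + c2 *: e2,
   ev b e1 = c2 * m & ev b e2 = - (c1 * m)].
Proof.
have [c1 [c2 bR]] := hspan (ex_intro _ b erefl).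
exists c1, c2; split => //.
  by have := skewR a1 b; rewrite -e1_def bR evDr !evZr ev_a1e1 ev_a1e2; lra.
by have := skewR a2 b; rewrite -e2_def bR evDr !evZr ev_a2e2 -/m; lra.
Qed.

Lemma m_neq0 : m != 0.
Proof.
apply/eqP => m0; move/eqP: e1_neq0; apply; apply: ev_eq0 => b.
by have [c1 [c2 [_ be1 _]]] := R_coords b; rewrite ev_sym be1 m0 mulr0.
Qed.

Lemma R_sharp b : b *m Rm = m^-1 *: sharp2 e1 e2 b.
Proof.
have [c1 [c2 [-> be1 be2]]] := R_coords b; rewrite /sharp2 be1 be2.
by have := m_neq0 => mn0; apply/rowP => k; rewrite !mxE; field.
Qed.

(* J R = R J^* makes b |-> b R J skew as well ... *)
Lemma ev_RJ_skew (a b : vec) : ev b (a *m Rm *m J) = - ev a (b *m Rm *m J).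
Proof. by rewrite RJ_eq_JtR skewR [in RHS]ev_mulmx. Qed.

(* ... which forces J to act on h = Im R by a scalar. *)
Lemma J_scalar_on_h : exists lam, e1 *m J = lam *: e1 /\ e2 *m J = lam *: e2.
Proof.
have [c11 [c12 e1J]] := hspan (imR_J (ex_intro _ a1 e1_def)).
have [c21 [c22 e2J]] := hspan (imR_J (ex_intro _ a2 e2_def)).
have mn0 := m_neq0.
have h11 := ev_RJ_skew a1 a1; rewrite -e1_def e1J evDr !evZr ev_a1e1 ev_a1e2 in h11.
have h22 := ev_RJ_skew a2 a2; rewrite -e2_def e2J evDr !evZr ev_a2e2 -/m in h22.
have h12 := ev_RJ_skew a1 a2.
rewrite -e1_def -e2_def e1J e2J !evDr !evZr ev_a1e1 ev_a1e2 ev_a2e2 -/m in h12.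
have cancel_m c : c * m = 0 -> c = 0.
  by move/eqP; rewrite mulf_eq0 (negbTE mn0) orbF => /eqP.
have c12_0 : c12 = 0 by apply: cancel_m; lra.
have c21_0 : c21 = 0 by apply: cancel_m; lra.
have c22_c11 : c22 = c11 by apply/eqP; rewrite -subr_eq0; apply/eqP/cancel_m; lra.
by exists c11; rewrite e1J e2J c12_0 c21_0 c22_c11 !scale0r addr0 add0r.
Qed.

Section ScalarOnH.
Variable lam : R.
Hypotheses (e1J : e1 *m J = lam *: e1) (e2J : e2 *m J = lam *: e2).

Lemma J_on_h v : in_imR Rm v -> v *m J = lam *: v.
Proof.
move/hspan => [c1 [c2 ->]].
by rewrite mulmxDl -!scalemxAl e1J e2J scalerDr !scalerA mulrC [c2 * _]mulrC.
Qed.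

Lemma one_add_sqr_neq0 : 1 + lam ^+ 2 != 0.
Proof. by rewrite lt0r_neq0 // ltr_pwDl // sqr_ge0. Qed.

(* J^2 + R sigma = -1 on e1 computes sigma(e1, e2) = m (1 + lam^2). *)
Let sg := ev (e1 *m S) e2.
Lemma sigma_e1e2 : m^-1 * sg = 1 + lam ^+ 2.
Proof.
have := JJ_add_SR e1; rewrite e1J -scalemxAl e1J R_sharp /sharp2 ev_S_diag -/sg.
rewrite scale0r sub0r => e1JJ.
have : (lam * lam - m^-1 * sg + 1) *: e1 = 0.
  rewrite -[RHS](subrr (- e1)) -{1}e1JJ.
  by apply/rowP => k; rewrite !mxE; ring.
move/eqP; rewrite scaler_eq0 (negbTE e1_neq0) orbF => /eqP.
by rewrite expr2; lra.
Qed.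

Lemma sg_neq0 : sg != 0.
Proof.
apply/eqP => sg0; move: sigma_e1e2; rewrite sg0 mulr0 => /esym/eqP.
by rewrite (negbTE one_add_sqr_neq0).
Qed.

(* A nonzero vector y with J^2 y = -y completes (e1, e2) to a basis
   (e1, e2, y, J y): applying J^2 to a vanishing combination kills its
   h-part (J^2 = lam^2 on h), and then J separates y from J y. *)
Lemma basis_h_complex_line (y : vec) :
  y *m J *m J = - y -> y != 0 -> basis4 e1 e2 y (y *m J).
Proof.
move=> yJJ y_neq0; apply: basis4_of_free => c; rewrite sum4 /= => comb0.
have combJJ : (c o0 *: e1 + c o1 *: e2 + c o2 *: y + c o3 *: (y *m J)) *m J *m J = 0.
  by rewrite comb0 !mul0mx.
rewrite !mulmxDl -!scalemxAl e1J e2J -!scalemxAl e1J e2J yJJ mulNmx in combJJ.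
have h_part : (1 + lam ^+ 2) *: (c o0 *: e1 + c o1 *: e2) = 0.
  rewrite -[RHS]addr0 -{1}comb0 -combJJ.
  by move: (y *m J) => z; apply/rowP => k; rewrite !mxE; ring.
move/eqP: h_part; rewrite scaler_eq0 (negbTE one_add_sqr_neq0) /=.
move=> /eqP /hfree [c0_0 c1_0]; rewrite c0_0 c1_0 !scale0r !add0r in comb0.
have combJ : (c o2 *: y + c o3 *: (y *m J)) *m J = 0 by rewrite comb0 mul0mx.
rewrite !mulmxDl -!scalemxAl yJJ in combJ.
have y_part : (c o2 ^+ 2 + c o3 ^+ 2) *: y = 0.
  rewrite -[RHS](subrr 0) -{1}(scaler0 _ (c o2)) -{1}comb0.
  rewrite -(scaler0 _ (c o3)) -combJ.
  by move: (y *m J) => z; apply/rowP => k; rewrite !mxE; ring.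
move/eqP: y_part; rewrite scaler_eq0 (negbTE y_neq0) orbF => /eqP sq0.
have c2_0 : c o2 = 0 by nra.
have c3_0 : c o3 = 0 by nra.
by apply: ord4P.
Qed.

Lemma ev_S_J (y z : vec) : ev (y *m S) (z *m J) = ev (y *m J *m S) z.
Proof. by rewrite ev_mulmx JS_eq_SJt. Qed.

(* Vectors with J^2 y = -y lie in p = ker sigma: sigma(y, .) vanishes on h
   because J^2 acts on h by lam^2 != -1, and on (y, J y) by skew-symmetry. *)
Lemma ker_sigma_of_complex (y : vec) : y *m J *m J = - y -> y *m S = 0.
Proof.
move=> yJJ; have [->|y_neq0] := eqVneq y 0; first by rewrite mul0mx.
have on_h z : in_imR Rm z -> ev (y *m S) z = 0.
  move=> hz; have : ev (y *m S) (z *m J *m J) = - ev (y *m S) z.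
    by rewrite ev_S_J ev_S_J yJJ mulNmx evNl.
  rewrite (J_on_h (imR_J hz)) (J_on_h hz) scalerA evZr => zJJ.
  have : (1 + lam ^+ 2) * ev (y *m S) z = 0 by rewrite expr2; lra.
  by move/eqP; rewrite mulf_eq0 (negbTE one_add_sqr_neq0) /= => /eqP.
apply: (basis_ev0 (basis_h_complex_line yJJ y_neq0)); apply: ord4P => /=.
- by apply: on_h; case: hbasis.
- by apply: on_h; case: hbasis.
- exact: ev_S_diag.
- by have := skewS (y *m J) y; rewrite -ev_S_J => ?; lra.
Qed.

(* g = h + p: v = - k w + (v + k w) with w = v sigma R and
   k = 1 / (1 + lam^2). *)
Lemma h_plus_p v : exists x y, [/\ in_imR Rm x, in_ker S y & v = x + y].
Proof.
set w := v *m S *m Rm; set k := (1 + lam ^+ 2)^-1.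
have hw : in_imR Rm w by exists (v *m S).
exists (- k *: w), (v + k *: w); split.
- by exists (- k *: (v *m S)); rewrite /w scalemxAl.
- apply: ker_sigma_of_complex.
  rewrite !mulmxDl -!scalemxAl (J_on_h (imR_J hw)) (J_on_h hw).
  have -> : v *m J *m J = - v - w by rewrite -(JJ_add_SR v) addrK.
  have := one_add_sqr_neq0 => lam_ne.
  by apply/rowP => j; rewrite !mxE /k; field.
- by rewrite addrCA scaleNr addNr addr0.
Qed.

(* h and p meet trivially, since sigma(e1, e2) != 0. *)
Lemma h_cap_p v : in_imR Rm v -> in_ker S v -> v = 0.
Proof.
move=> /hspan [c1 [c2 ->]]; rewrite /in_ker => vS0.
have := congr1 (fun a => ev a e1) vS0; have := congr1 (fun a => ev a e2) vS0.
rewrite /= !mulmxDl -!scalemxAl !evDl !evZl !ev0l !ev_S_diag -/sg skewS -/sg.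
rewrite mulr0 addr0 mulr0 add0r mulrN => /eqP + /eqP.
rewrite oppr_eq0 !mulf_eq0 (negbTE sg_neq0) !orbF => /eqP -> /eqP ->.
by rewrite !scale0r addr0.
Qed.

Section AdaptedBasis.
Variable e3 : vec.
Hypotheses (e3S : e3 *m S = 0) (e3_neq0 : e3 != 0).
Let e4 := e3 *m J.
Let es := [:: e1; e2; e3; e4].
Let dual := dualb e1 e2 e3 e4.

Lemma e3JJ : e3 *m J *m J = - e3.
Proof. by have := JJ_add_SR e3; rewrite e3S mul0mx addr0. Qed.
Lemma e4S : e4 *m S = 0.
Proof. by rewrite /e4 JS_eq_SJt e3S mul0mx. Qed.
Lemma adapted_basis : basis4 e1 e2 e3 e4.
Proof. exact: basis_h_complex_line e3JJ e3_neq0. Qed.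

Lemma dualE (i j : 'I_4) : ev (dual i) es`_j = (i == j)%:R.
Proof. by apply: dualbE; case: adapted_basis. Qed.

Lemma covector_ext (a b : vec) : (forall j : 'I_4, ev a es`_j = ev b es`_j) -> a = b.
Proof.
move=> ab; apply/eqP; rewrite -subr_eq0; apply/eqP; apply: (basis_ev0 adapted_basis).
by move=> j; rewrite evBl ab subrr.
Qed.

Local Ltac dual_simpl :=
  rewrite ?(dualE o0 o0, dualE o0 o1, dualE o0 o2, dualE o0 o3, dualE o1 o0,
    dualE o1 o1, dualE o1 o2, dualE o1 o3, dualE o2 o0, dualE o2 o1, dualE o2 o2,
    dualE o2 o3, dualE o3 o0, dualE o3 o1, dualE o3 o2, dualE o3 o3) /=.

Lemma e1S : e1 *m S = sg *: dual o1.
Proof.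
apply: covector_ext; apply: ord4P => /=; rewrite evZl; dual_simpl.
- by rewrite ev_S_diag mulr0.
- by rewrite mulr1.
- by rewrite skewS e3S ev0l oppr0 mulr0.
- by rewrite skewS e4S ev0l oppr0 mulr0.
Qed.

Lemma e2S : e2 *m S = - (sg *: dual o0).
Proof.
apply: covector_ext; apply: ord4P => /=; rewrite evNl evZl; dual_simpl.
- by rewrite skewS -/sg mulr1.
- by rewrite ev_S_diag mulr0 oppr0.
- by rewrite skewS e3S ev0l oppr0 mulr0 oppr0.
- by rewrite skewS e4S ev0l oppr0 mulr0 oppr0.
Qed.

Lemma dual0R : dual o0 *m Rm = m^-1 *: e2.
Proof. by rewrite R_sharp /sharp2; dual_simpl; rewrite scale1r scale0r subr0. Qed.
Lemma dual1R : dual o1 *m Rm = - (m^-1 *: e1).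
Proof. by rewrite R_sharp /sharp2; dual_simpl; rewrite scale1r scale0r sub0r scalerN. Qed.
Lemma dual2R : dual o2 *m Rm = 0.
Proof. by rewrite R_sharp /sharp2; dual_simpl; rewrite !scale0r subrr scaler0. Qed.
Lemma dual3R : dual o3 *m Rm = 0.
Proof. by rewrite R_sharp /sharp2; dual_simpl; rewrite !scale0r subrr scaler0. Qed.

Local Ltac dualJ_by_values :=
  apply: covector_ext; apply: ord4P => /=;
  rewrite -ev_mulmx ?evZl ?evNl ?e1J ?e2J ?e3JJ -?/e4 ?evZr ?evNr; dual_simpl;
  by rewrite ?mulr0 ?oppr0.

Lemma dual0J : dual o0 *m J^T = lam *: dual o0. Proof. dualJ_by_values. Qed.
Lemma dual1J : dual o1 *m J^T = lam *: dual o1. Proof. dualJ_by_values. Qed.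
Lemma dual2J : dual o2 *m J^T = - dual o3. Proof. dualJ_by_values. Qed.
Lemma dual3J : dual o3 *m J^T = dual o2. Proof. dualJ_by_values. Qed.

(* Item 1 for sigma: sigma = m (1 + lam^2) e^12_#, with a = m^-1. *)
Lemma sigma_flat u :
  u *m S = ((m^-1)^-1 * (1 + lam ^+ 2)) *: flat2 (dual o0) (dual o1) u.
Proof.
have -> : (m^-1)^-1 * (1 + lam ^+ 2) = sg.
  by rewrite invrK -sigma_e1e2 mulrA mulrV ?mul1r // unitfE m_neq0.
apply: covector_ext; apply: ord4P => /=;
  rewrite skewS /flat2 evZl evBl !evZl; dual_simpl.
- by rewrite e1S evZl; ring.
- by rewrite e2S evNl evZl; ring.
- by rewrite e3S ev0l; ring.
- by rewrite e4S ev0l; ring.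
Qed.

Local Notation K := (Kop J Rm S).
Lemma K_e1 : K (e1, 0) = (lam *: e1, sg *: dual o1).
Proof. by rewrite /Kop /= e1J e1S !mul0mx addr0 subr0. Qed.
Lemma K_e3 : K (e3, 0) = (e4, 0).
Proof. by rewrite /Kop /= e3S !mul0mx addr0 subr0. Qed.
Lemma K_e4 : K (e4, 0) = (- e3, 0).
Proof. by rewrite /Kop /= e4S e3JJ !mul0mx addr0 subr0. Qed.
Lemma K_dual0 : K (0, dual o0) = (m^-1 *: e2, - (lam *: dual o0)).
Proof. by rewrite /Kop /= dual0R dual0J !mul0mx add0r sub0r. Qed.
Lemma K_dual1 : K (0, dual o1) = (- (m^-1 *: e1), - (lam *: dual o1)).
Proof. by rewrite /Kop /= dual1R dual1J !mul0mx add0r sub0r. Qed.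

Lemma torsion_coord (l : vec) x y : ev l (nijenhuis br K x y).1 = 0.
Proof. by rewrite torsion0 /= ev0r. Qed.

Lemma ev_dual_R (k : 'I_4) (a : vec) : ev (dual k) (a *m Rm) = - ev a (dual k *m Rm).
Proof. exact: skewR. Qed.
Lemma ev_mulJ (l w : vec) : ev l (w *m J) = ev (l *m J^T) w.
Proof. exact: ev_mulmx. Qed.

Local Ltac expand :=
  rewrite ?(dual0R, dual1R, dual2R, dual3R, dual0J, dual1J, dual2J, dual3J,
    ev_mulJ, ev_dual_R, evDr, evBr, evNr, evZr, ev0r, evDl, evBl, evNl, evZl, ev0l,
    ev_adt bil, brZl bil, brZr bil, brNl bil, brNr bil, br0l bil, br0r bil,
    brDl bil, brDr bil, brBl bil, brBr bil).

Local Ltac torsion_expand :=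
  rewrite /nijenhuis K2 ?K_e1 ?K_e3 ?K_e4 ?K_dual0 ?K_dual1 /padd /psub /popp /=;
  expand; rewrite ?(br_anti bil alt e1 e2, br_anti bil alt e1 e3,
    br_anti bil alt e1 e4, br_anti bil alt e2 e3, br_anti bil alt e2 e4,
    br_anti bil alt e3 e4) ?alt; expand.

Local Notation C u v k := (ev (dual k) (br u v)).

Lemma cancel_minv x : m^-1 * x = 0 -> x = 0.
Proof. by move/eqP; rewrite mulf_eq0 invr_eq0 (negbTE m_neq0) /= => /eqP. Qed.
Lemma cancel_one_add_sqr x : (1 + lam ^+ 2) * x = 0 -> x = 0.
Proof. by move/eqP; rewrite mulf_eq0 (negbTE one_add_sqr_neq0) /= => /eqP. Qed.

(* N(e1, e^1) = 0 on e^3, e^4: [e1, e2] lies in h. *)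
Lemma br12_in_h : C e1 e2 o2 = 0 /\ C e1 e2 o3 = 0.
Proof.
have := torsion_coord (dual o2) (e1, 0) (0, dual o0); torsion_expand => t2.
have := torsion_coord (dual o3) (e1, 0) (0, dual o0); torsion_expand => t3.
have P : lam * C e1 e2 o2 + C e1 e2 o3 = 0 by apply: cancel_minv; lra.
have Q : lam * C e1 e2 o3 - C e1 e2 o2 = 0 by apply: cancel_minv; lra.
have c3 : C e1 e2 o3 = 0.
  by apply: cancel_one_add_sqr; rewrite -[RHS](addr0 0) -{1}(mulr0 lam) -{1}Q -P; ring.
by split => //; move/eqP: Q; rewrite c3 mulr0 sub0r oppr_eq0 => /eqP.
Qed.

(* N(e3, e^2) = 0 on e^3, e^4: ad e1 commutes with J on p, modulo h. *)
Lemma br1_p_complex : C e1 e4 o2 = - C e1 e3 o3 /\ C e1 e4 o3 = C e1 e3 o2.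
Proof.
have := torsion_coord (dual o2) (e3, 0) (0, dual o1); torsion_expand => t2.
have := torsion_coord (dual o3) (e3, 0) (0, dual o1); torsion_expand => t3.
split; apply/eqP.
  by rewrite -addr_eq0; apply/eqP/cancel_minv; lra.
by rewrite -subr_eq0; apply/eqP/cancel_minv; lra.
Qed.

(* N(e3, e^1) = 0 on e^3, e^4: the same for ad e2. *)
Lemma br2_p_complex : C e2 e4 o2 = - C e2 e3 o3 /\ C e2 e4 o3 = C e2 e3 o2.
Proof.
have := torsion_coord (dual o2) (e3, 0) (0, dual o0); torsion_expand => t2.
have := torsion_coord (dual o3) (e3, 0) (0, dual o0); torsion_expand => t3.
split; apply/eqP.
  by rewrite -addr_eq0; apply/eqP/cancel_minv; lra.
by rewrite -subr_eq0; apply/eqP/cancel_minv; lra.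
Qed.

(* N(e1, e3) = 0 and N(e1, e4) = 0 on e^1: the h-parts of ad e3 and ad e4
   are trace-free. *)
Lemma br3_h_tracefree : C e2 e3 o1 = - C e1 e3 o0.
Proof.
have := torsion_coord (dual o0) (e1, 0) (e3, 0); torsion_expand => t.
have : (1 + lam ^+ 2) * C e1 e3 o0 + (m^-1 * sg) * C e2 e3 o1 = 0 by rewrite expr2; lra.
rewrite sigma_e1e2 -mulrDr => /cancel_one_add_sqr /eqP; rewrite addr_eq0 => /eqP ->.
by rewrite opprK.
Qed.

Lemma br4_h_tracefree : C e2 e4 o1 = - C e1 e4 o0.
Proof.
have := torsion_coord (dual o0) (e1, 0) (e4, 0); torsion_expand => t.
have : (1 + lam ^+ 2) * C e1 e4 o0 + (m^-1 * sg) * C e2 e4 o1 = 0 by rewrite expr2; lra.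
rewrite sigma_e1e2 -mulrDr => /cancel_one_add_sqr /eqP; rewrite addr_eq0 => /eqP ->.
by rewrite opprK.
Qed.

Lemma adapted_coords v :
  v = ev (dual o0) v *: e1 + ev (dual o1) v *: e2 + ev (dual o2) v *: e3
      + ev (dual o3) v *: e4.
Proof.
have [_ span] := adapted_basis; have [c ->] := span v; rewrite sum4 /= !evDr !evZr.
by dual_simpl; apply/rowP => k; rewrite !mxE; ring.
Qed.

Lemma adapted_bracket_form :
  exists a1 a2 b1 b2 b3 b4 x1 x2 y1 y2 p1 p2 q1 q2 r1 r2 : R,
  bracket_form br e1 e2 e3 e4 a1 a2 b1 b2 b3 b4 x1 x2 y1 y2 p1 p2 q1 q2 r1 r2.
Proof.
have [c123 c124] := br12_in_h; have [c1p c1p'] := br1_p_complex.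
have [c2p c2p'] := br2_p_complex; have t3 := br3_h_tracefree.
have t4 := br4_h_tracefree.
exists (C e1 e2 o0), (C e1 e2 o1), (C e3 e4 o0), (C e3 e4 o1), (C e3 e4 o2),
  (C e3 e4 o3), (C e1 e3 o2), (C e2 e3 o2), (- C e1 e3 o3), (- C e2 e3 o3),
  (- C e1 e3 o0), (- C e1 e4 o0), (- C e2 e3 o0), (- C e2 e4 o0),
  (- C e1 e3 o1), (- C e1 e4 o1).
split; [|exact: adapted_coords| |split]; rewrite [LHS]adapted_coords.
- by rewrite c123 c124 !scale0r !addr0.
- by apply/rowP => k; rewrite !mxE; ring.
- by rewrite c1p c1p'; apply/rowP => k; rewrite !mxE; ring.
- by rewrite t3; apply/rowP => k; rewrite !mxE; ring.
- by rewrite t4 c2p c2p'; apply/rowP => k; rewrite !mxE; ring.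
Qed.
End AdaptedBasis.
End ScalarOnH.
End BasisOfH.

Lemma h_p_decomposition (e1 e2 : vec) : basis_imR Rm e1 e2 ->
  (forall v : vec, exists x y, [/\ in_imR Rm x, in_ker S y & v = x + y]) /\
  (forall v : vec, in_imR Rm v -> in_ker S v -> v = 0).
Proof.
move=> hb; have [a1 e1_def] : in_imR Rm e1 by case: hb.
have [a2 e2_def] : in_imR Rm e2 by case: hb.
have [lam [e1J e2J]] := J_scalar_on_h hb e1_def e2_def.
by split=> v; [apply: (h_plus_p hb e1J e2J) | apply: (h_cap_p hb e1_def e2_def e1J)].
Qed.

Lemma adapted_normal_form (e1 e2 e3 : vec) :
  basis_imR Rm e1 e2 -> in_ker S e3 -> e3 != 0 ->
  let e4 := e3 *m J in
  basis4 e1 e2 e3 e4 /\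
  (exists (lam a : R), [/\ a != 0,
     [/\ e1 *m J = lam *: e1, e2 *m J = lam *: e2, e3 *m J = e4 & e4 *m J = - e3],
     (forall al : vec, al *m Rm = a *: sharp2 e1 e2 al)
   & (forall u : vec, u *m S = (a^-1 * (1 + lam ^+ 2)) *:
        flat2 (dualb e1 e2 e3 e4 0) (dualb e1 e2 e3 e4 1) u)]) /\
  (exists a1 a2 b1 b2 b3 b4 x1 x2 y1 y2 p1 p2 q1 q2 r1 r2 : R,
     bracket_form br e1 e2 e3 e4 a1 a2 b1 b2 b3 b4 x1 x2 y1 y2 p1 p2 q1 q2 r1 r2).
Proof.
move=> hb e3S e3_neq0 e4.
have [a1 e1_def] : in_imR Rm e1 by case: hb.
have [a2 e2_def] : in_imR Rm e2 by case: hb.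
have [lam [e1J e2J]] := J_scalar_on_h hb e1_def e2_def.
split; first exact: (adapted_basis hb e1J e2J e3S e3_neq0).
split; last exact: (adapted_bracket_form hb e1_def e2_def e1J e2J e3S e3_neq0).
exists lam, (ev a2 e1)^-1; split.
- by rewrite invr_eq0 (m_neq0 hb e1_def e2_def).
- by split => //; apply: e3JJ.
- exact: (R_sharp hb e1_def e2_def).
- have -> : (0 : 'I_4) = o0 by apply: val_inj.
  have -> : (1 : 'I_4) = o1 by apply: val_inj.
  exact: (sigma_flat hb e1_def e2_def e1J e2J e3S e3_neq0).
Qed.
End GeneralizedComplex.

Unset Implicit Arguments.

Theorem proposition2p1 (R : realType) (br : 'rV[R]_4 -> 'rV[R]_4 -> 'rV[R]_4)
    (J Rm S : 'M[R]_4) :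
  lie_bracket br -> gen_complex br J Rm S -> gc_type Rm = 1%N ->
  (* g = h (+) p, with h = Im R and p = ker sigma *)
  ((forall v : 'rV[R]_4, exists x y, [/\ in_imR Rm x, in_ker S y & v = x + y]) /\
   (forall v : 'rV[R]_4, in_imR Rm v -> in_ker S v -> v = 0)) /\
  (forall e1 e2 e3 : 'rV[R]_4,
     basis_imR Rm e1 e2 -> in_ker S e3 -> e3 != 0 ->
     let e4 := e3 *m J in
     basis4 e1 e2 e3 e4 /\
     (* item 1 *)
     (exists (lam a : R), [/\ a != 0,
        [/\ e1 *m J = lam *: e1, e2 *m J = lam *: e2,
            e3 *m J = e4 & e4 *m J = - e3],
        (forall al : 'rV[R]_4, al *m Rm = a *: sharp2 e1 e2 al)
      & (forall u : 'rV[R]_4, u *m S =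
           (a^-1 * (1 + lam ^+ 2)) *:
             flat2 (dualb e1 e2 e3 e4 0) (dualb e1 e2 e3 e4 1) u)]) /\
     (* item 2 *)
     (exists a1 a2 b1 b2 b3 b4 x1 x2 y1 y2 p1 p2 q1 q2 r1 r2 : R,
        bracket_form br e1 e2 e3 e4 a1 a2 b1 b2 b3 b4 x1 x2 y1 y2 p1 p2 q1 q2 r1 r2)) /\
  (* item 3: for any alternating bilinear bracket of the form of item 2
     (in any basis), Jacobi <-> the system *)
  (forall (br' : 'rV[R]_4 -> 'rV[R]_4 -> 'rV[R]_4) (f1 f2 f3 f4 : 'rV[R]_4)
          (a1 a2 b1 b2 b3 b4 x1 x2 y1 y2 p1 p2 q1 q2 r1 r2 : R),
     bilinear_br br' -> alternating_br br' -> basis4 f1 f2 f3 f4 ->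
     bracket_form br' f1 f2 f3 f4 a1 a2 b1 b2 b3 b4 x1 x2 y1 y2 p1 p2 q1 q2 r1 r2 ->
     (jacobi_br br' <->
      jacobi_system a1 a2 b1 b2 b3 b4 x1 x2 y1 y2 p1 p2 q1 q2 r1 r2)).
Proof.
move=> [bil alt _] [skewR skewS [K2 _ torsion0]] type1.
have [f1 [f2 hbasis]] := basis_imR_exists skewR type1.
split; first exact: (h_p_decomposition skewR skewS K2 hbasis).
split; first exact: (adapted_normal_form bil alt skewR skewS K2 torsion0).
move=> br' f1' f2' f3' f4' a1 a2 b1 b2 b3 b4 x1 x2 y1 y2 p1 p2 q1 q2 r1 r2.
exact: jacobi_iff_system.
Qed.
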